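(* Let $\epsilon > 0$ and $N \geq 1$ be real numbers. Let $\alpha$ be a real number and suppose there are integers $a$ and $q$ with $1 \leq q \leq N^{4/3}$, $\gcd(a,q) = 1$, and $\left|\alpha - \frac{a}{q}\right| \leq \frac{1}{q N^{4/3}}$. Then there exist integers $a_1, a_2$ and integers $1 \leq q_1, q_2 \leq N$ such that $$\left|\alpha - \frac{a_1}{q_1} - \frac{a_2}{q_2}\right| \leq \frac{C_\epsilon}{q N^{4/3 - \epsilon}},$$ where $C_\epsilon>0$ is a constant depending only on $\epsilon$. *)

From Stdlib Require Import Reals ZArith Znumtheory.

From Stdlib Require Import Reals ZArith Znumtheory.
From Stdlib Require Import Lra Lia List FinFun Classical ClassicalEpsilon.
Require mathcomp.boot.all_boot.

(* Fix d = min(eps, 1).  For bounded N (N < N0(d)) the bound is trivial.  Otherwise let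
   n = floor N, l = floor(log2 n) + 1 = O(N^{d/5}) and Y = floor(n/(8l)).  By Chebyshev's lower
   bound for pi(n), obtained from the central binomial coefficient, at least n/(4l) primes x lie
   in (Y, n].  For each of them Dirichlet's theorem gives 1 <= y <= Y and M with
   |e| (Y+1) <= q, where e = a x y - M q.  If for every such x the error e were nonzero and y
   small (y <= Ym ~ q N^{4/3-d} / (C' Y^2)), then x would be determined by the triple
   (y, e, floor(x/(Y+1))): gcd(a, q) = 1 gives q | e (x - x'), while 0 < |e (x - x')| < q.
   Counting triples shows this is impossible, so some x has e = 0 or y > Ym, whence
   |alpha - M/(xy)| <= (1 + C')/(q N^{4/3-d}).  As y < x and x is prime, Bezout's identity
   u x - v y = 1 splits M/(xy) = -(M v)/x + (M u)/y. *)

Module Chebyshev.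
Import mathcomp.boot.all_boot.
Local Open Scope nat_scope.
Local Set Implicit Arguments.
Local Unset Strict Implicit.

Lemma sum_indicator M t : \sum_(1 <= k < M.+1) (k <= t : nat) = minn M t.
Proof.
elim: M => [|M IH]; first by rewrite big_geq ?min0n.
rewrite big_nat_recr //= IH; case: (leqP M.+1 t) => [HMt|HtM].
- by rewrite (minn_idPl (ltnW HMt)) addn1.
- by rewrite (minn_idPr (HtM : t <= M)) addn0.
Qed.

(* Legendre's sum for m! may be extended past k = m: the terms m / p^k vanish there. *)
Lemma sum_floor_extend p m n : 1 < p -> m <= n ->
  \sum_(1 <= k < m.+1) m %/ p ^ k = \sum_(1 <= k < n.+1) m %/ p ^ k.
Proof.
move=> p_gt1 le_mn; rewrite [RHS](big_cat_nat _ (n := m.+1)) //=.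
rewrite [X in _ + X]big1_seq ?addn0 // => k /andP[_]; rewrite mem_iota => /andP[lt_mk _].
exact/divn_small/(leq_trans lt_mk)/ltnW/ltn_expl.
Qed.

(* floor(2m / p^k) <= 2 floor(m / p^k) + 1, and the left side vanishes once p^k > 2m. *)
Lemma floor_double_le p m k : 1 < p ->
  (m + m) %/ p ^ k <= m %/ p ^ k + m %/ p ^ k + (k <= trunc_log p (m + m) : nat).
Proof.
move=> p_gt1; case: (leqP k (trunc_log p (m + m))) => [_|lt_tk]; first exact: leq_divDl.
rewrite divn_small // ltnNge; apply/negP => /(trunc_log_max p_gt1).
by rewrite leqNgt lt_tk.
Qed.

(* By Legendre's formula, every prime power exactly dividing C(2m, m) is at most 2m. *)
Lemma pfactor_central_binomial_le p m : prime p -> 0 < m ->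
  p ^ logn p 'C(m.*2, m) <= m.*2.
Proof.
move=> p_pr m_gt0; have p_gt1 := prime_gt1 p_pr.
apply: leq_trans (trunc_logP p_gt1 _); last by rewrite double_gt0.
rewrite leq_exp2l // -addnn.
have := congr1 (logn p) (bin_fact (leq_addr m m)).
rewrite addnK lognM ?muln_gt0 ?fact_gt0 ?bin_gt0 ?leq_addr // lognM ?fact_gt0 //.
rewrite !logn_fact // (sum_floor_extend p_gt1 (leq_addr m m)) => legendre.
have : \sum_(1 <= k < (m + m).+1) (m + m) %/ p ^ k <= \sum_(1 <= k < (m + m).+1)
    (m %/ p ^ k + m %/ p ^ k + (k <= trunc_log p (m + m) : nat)).
  by apply: leq_sum => k _; exact: floor_double_le.
rewrite !big_split /= -legendre sum_indicator addnC leq_add2l.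
by move/leq_trans; apply; rewrite geq_minr.
Qed.

(* C(2m, m) >= 2^m, since C(2m+2, m+1) >= 2 C(2m, m). *)
Lemma central_binomial_ge m : 2 ^ m <= 'C(m.*2, m).
Proof.
elim: m => [|m IH] //.
have mono : 'C(m.*2, m) <= 'C(m.*2.+1, m).
  by case: m {IH} => [|m] //; rewrite [X in _ <= X]binS leq_addr.
rewrite doubleS -(leq_pmul2l (ltn0Sn m)) -mul_bin_diag [_.-1]/= expnS.
rewrite -[m.*2.+2]/((m.+1).*2) -mul2n -mulnA mulnCA !leq_pmul2l //.
exact: leq_trans IH mono.
Qed.

Definition prime_pi (n : nat) : nat := count prime (iota 0 n.+1).

Lemma prime_pi_mono k n : k <= n -> prime_pi k <= prime_pi n.
Proof.
by move=> le_kn; rewrite /prime_pi -(subnKC le_kn) -addSn iotaD count_cat leq_addr.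
Qed.

Lemma central_binomial_le_pow m l : 0 < m -> m.*2 < 2 ^ l ->
  'C(m.*2, m) <= 2 ^ (l * size (primes 'C(m.*2, m))).
Proof.
move=> m_gt0 lt_m2l; set C := 'C(m.*2, m).
have C_gt0 : 0 < C by rewrite bin_gt0 -addnn leq_addr.
rewrite {1}(prod_prime_decomp C_gt0) prime_decompE big_map /= expnM.
have -> : (2 ^ l) ^ size (primes C) = \prod_(p <- primes C) 2 ^ l.
  by rewrite big_const_seq count_predT iter_muln_1.
rewrite !big_seq; apply: leq_prod => p p_C.
have p_pr : prime p by move: p_C; rewrite mem_primes => /andP[].
exact: ltnW (leq_ltn_trans (pfactor_central_binomial_le p_pr m_gt0) lt_m2l).
Qed.

Lemma size_primes_central_binomial m : 0 < m ->
  size (primes 'C(m.*2, m)) <= prime_pi m.*2.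
Proof.
move=> m_gt0; rewrite /prime_pi -size_filter.
apply: uniq_leq_size (primes_uniq _) _ => p p_C.
have /and3P[p_pr _ _] : [&& prime p, 0 < 'C(m.*2, m) & p %| 'C(m.*2, m)].
  by rewrite -mem_primes.
rewrite mem_filter p_pr mem_iota leq0n add0n ltnS /=.
apply: leq_trans (pfactor_central_binomial_le p_pr m_gt0).
have : 0 < logn p 'C(m.*2, m) by rewrite logn_gt0.
by case: logn => // k _; rewrite expnS leq_pmulr ?expn_gt0 ?prime_gt0.
Qed.

(* Chebyshev's lower bound: n - 1 <= 2 l pi(n) whenever n < 2^l (take m = floor(n/2)). *)
Lemma chebyshev_lower n l : 2 <= n -> n < 2 ^ l -> n.-1 <= (l * prime_pi n).*2.
Proof.
move=> n_ge2 lt_nl; set m := n./2.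
have m_gt0 : 0 < m by rewrite /m -(half_double 1) half_leq.
have n_split := odd_double_half n; rewrite -/m in n_split.
have le_m2n : m.*2 <= n by rewrite -n_split leq_addl.
have : n.-1 <= m.*2 by rewrite -n_split; case: odd; rewrite ?add0n ?leq_pred.
move/leq_trans; apply; rewrite leq_double.
have := leq_trans (central_binomial_ge m) (central_binomial_le_pow m_gt0 (leq_ltn_trans le_m2n lt_nl)).
rewrite leq_exp2l // => /leq_trans; apply; rewrite leq_mul2l.
by rewrite (leq_trans (size_primes_central_binomial m_gt0)) ?prime_pi_mono ?orbT.
Qed.

Definition primes_between (Y n : nat) : list nat := filter prime (iota Y.+1 (n - Y)).

Lemma In_mem (s : seq nat) x : List.In x s -> x \in s.
Proof. by elim: s => //= y s IH [->|/IH]; rewrite in_cons ?eqxx // => ->; rewrite orbT. Qed.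

Lemma mem_primes_between Y n x :
  List.In x (primes_between Y n) -> prime x /\ Y < x <= n.
Proof.
move/In_mem; rewrite mem_filter mem_iota => /and3P[x_pr lt_Yx lt_x].
split=> //; rewrite lt_Yx /=.
case: (leqP Y n) => [le_Yn|/ltnW/eqP Yn0]; first by rewrite addSn subnKC in lt_x.
by rewrite Yn0 addn0 ltnNge lt_Yx in lt_x.
Qed.

Lemma primes_between_range Y n x :
  List.In x (primes_between Y n) -> (Y < x /\ x <= n)%coq_nat.
Proof. by case/mem_primes_between => _ /andP[/ltP ? /leP ?]. Qed.

Lemma primes_between_NoDup Y n : List.NoDup (primes_between Y n).
Proof.
have : uniq (primes_between Y n) by rewrite filter_uniq ?iota_uniq.
elim: (primes_between Y n) => [|x s IH] /=; first by constructor.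
by case/andP=> x_s /IH s_nd; constructor=> // /In_mem; apply/negP.
Qed.

(* Every member of the list is a prime x > Y, hence coprime to any 0 < y <= Y. *)
Lemma primes_between_bezout Y n x y : List.In x (primes_between Y n) ->
  (0 < y /\ y <= Y)%coq_nat -> exists u v, Nat.mul u x = Nat.add (Nat.mul v y) 1.
Proof.
case/mem_primes_between => x_pr /andP[lt_Yx _] [/ltP y_gt0 /leP le_yY].
have [v _] := Bezoutl y (prime_gt0 x_pr).
have /eqP-> : coprime x y.
  by rewrite prime_coprime //; apply/negP => /(dvdn_leq y_gt0); rewrite leqNgt (leq_ltn_trans le_yY).
by case/dvdnP=> u def_u; exists u, v; rewrite !multE plusE -def_u addnC.
Qed.

Lemma expn_pow m k : m ^ k = Nat.pow m k.
Proof. by elim: k => // k IH; rewrite expnS IH. Qed.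

Lemma primes_between_length Y n l : (2 <= n)%coq_nat -> (n < Nat.pow 2 l)%coq_nat ->
  (Y <= n)%coq_nat ->
  (Nat.sub n 1 <= Nat.mul 2 (Nat.mul l (Nat.add (Nat.add Y 1) (length (primes_between Y n)))))%coq_nat.
Proof.
move=> /leP n_ge2 /leP; rewrite -expn_pow => lt_nl /leP le_Yn; apply/leP.
have size_length (s : seq nat) : size s = length s by elim: s => //= x s ->.
rewrite minusE !multE !plusE -size_length size_filter subn1 mul2n.
apply: leq_trans (chebyshev_lower n_ge2 lt_nl) _; rewrite leq_double leq_mul2l.
apply/orP; right; rewrite /prime_pi -{1}(subnKC le_Yn) -addSn iotaD count_cat add0n.
by rewrite addn1 leq_add2r -[X in _ <= X](size_iota 0 Y.+1) count_size.
Qed.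

End Chebyshev.

Open Scope Z_scope.

Lemma many_large_primes (Y n l : nat) : (16 * l < n)%nat -> (n < 2 ^ l)%nat ->
  (8 * l * Y <= n)%nat -> (n <= 4 * l * length (Chebyshev.primes_between Y n))%nat.
Proof.
intros l_small n_lt le_Yn.
assert (l_pos : (1 <= l)%nat) by (destruct l; simpl in n_lt; lia).
assert (Y_le : (Y <= n)%nat) by nia.
assert (n_ge2 : (2 <= n)%nat) by lia.
pose proof (Chebyshev.primes_between_length n_ge2 n_lt Y_le).
nia.
Qed.

Section Dirichlet.
(* Dirichlet's approximation theorem for the rational r/q, proved by the pigeonhole
   principle on the residues r j mod q (0 <= j <= Y) sorted into Y+1 boxes of width q/(Y+1). *)
Variables (r q Y : Z).
Hypotheses (q_pos : 1 <= q) (Y_pos : 1 <= Y).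

Let residue (j : nat) : Z := (r * Z.of_nat j) mod q.
Let box (j : nat) : nat := Z.to_nat (residue j * (Y + 1) / q).

Lemma box_spec (j : nat) :
  Z.of_nat (box j) * q <= residue j * (Y + 1) < (Z.of_nat (box j) + 1) * q /\
  Z.of_nat (box j) <= Y.
Proof.
assert (res_bound : 0 <= residue j < q) by (apply Z.mod_pos_bound; lia).
pose proof (Z.div_mod (residue j * (Y + 1)) q ltac:(lia)) as div_eq.
pose proof (Z.mod_pos_bound (residue j * (Y + 1)) q ltac:(lia)) as rem_bound.
assert (quot_pos : 0 <= residue j * (Y + 1) / q) by (apply Z.div_pos; nia).
unfold box; rewrite Z2Nat.id by exact quot_pos.
set (b := residue j * (Y + 1) / q) in *.
assert (b * q < (Y + 1) * q) by nia.
split; [split|]; nia.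
Qed.

Lemma residue_spec (j : nat) :
  r * Z.of_nat j = q * (r * Z.of_nat j / q) + residue j /\ 0 <= residue j < q.
Proof. split; [apply Z.div_mod | apply Z.mod_pos_bound]; lia. Qed.

(* A residue in the top box is within q/(Y+1) below a multiple of q. *)
Lemma approx_from_top_box (j : nat) : (j <= Z.to_nat Y)%nat -> box j = Z.to_nat Y ->
  exists y M, 1 <= y <= Y /\ Z.abs (r * y - M * q) * (Y + 1) <= q.
Proof.
intros j_le top.
destruct (box_spec j) as [[lo _] _]; rewrite top, Z2Nat.id in lo by lia.
destruct (residue_spec j) as [div_eq res_bound].
assert (j_pos : j <> 0%nat).
{ intros ->; unfold residue in lo; rewrite Z.mul_0_r, Zmod_0_l in lo; nia. }
exists (Z.of_nat j), (r * Z.of_nat j / q + 1); split; [lia|].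
rewrite Z.abs_neq by nia; nia.
Qed.

(* Two residues in the same box differ by less than q/(Y+1). *)
Lemma approx_from_collision (i j : nat) : (i < j <= Z.to_nat Y)%nat -> box i = box j ->
  exists y M, 1 <= y <= Y /\ Z.abs (r * y - M * q) * (Y + 1) <= q.
Proof.
intros ij same.
destruct (box_spec i) as [[lo_i hi_i] _], (box_spec j) as [[lo_j hi_j] _].
rewrite same in lo_i, hi_i.
destruct (residue_spec i) as [div_i _], (residue_spec j) as [div_j _].
exists (Z.of_nat j - Z.of_nat i), (r * Z.of_nat j / q - r * Z.of_nat i / q); split; [lia|].
replace (r * (Z.of_nat j - Z.of_nat i) - (r * Z.of_nat j / q - r * Z.of_nat i / q) * q)
  with (residue j - residue i) by lia.
destruct (Z.abs_spec (residue j - residue i)) as [[_ ->]|[_ ->]]; nia.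
Qed.

(* Dirichlet: either two residues share a box or some residue lies in the top box. *)
Lemma dirichlet : exists y M, 1 <= y <= Y /\ Z.abs (r * y - M * q) * (Y + 1) <= q.
Proof.
set (m := Z.to_nat (Y + 1)).
assert (box_range : bFun m box).
{ intros j _; destruct (box_spec j) as [_ ?]; unfold m; lia. }
destruct (classic (bInjective m box)) as [inj | not_inj].
- destruct (proj1 (bInjective_bSurjective box_range) inj (Z.to_nat Y)) as [j [j_lt top]]; [unfold m; lia|].
  apply (approx_from_top_box j); [unfold m in j_lt; lia | exact top].
- apply NNPP; intro no_approx; apply not_inj; intros i j i_lt j_lt same.
  destruct (Nat.lt_total i j) as [ij|[->|ji]]; [exfalso|reflexivity|exfalso];
    apply no_approx; unfold m in *.
  + apply (approx_from_collision i j); [lia | exact same].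
  + apply (approx_from_collision j i); [lia | symmetry; exact same].
Qed.

End Dirichlet.

Lemma small_multiple_is_zero (q z : Z) : (q | z) -> Z.abs z < q -> z = 0.
Proof. intros [k ->] H. destruct (Z.eq_dec k 0) as [->|Hk]; [lia|]. nia. Qed.

Section Counting.
(* The pigeonhole step: for many primes x, a x / q cannot always be badly approximated by
   fractions with small denominators y <= Ym and nonzero error, because the data
   (y, error, block of x) would then determine x. *)
Variables (a q : Z) (Y Ym n : nat).
Hypotheses (q_pos : 1 <= q) (coprime_aq : Z.gcd a q = 1) (Y_pos : (1 <= Y)%nat).

(* The admissible errors e satisfy |e| <= E = floor(q / (Y + 1)). *)
Let E : nat := Z.to_nat (q / (Z.of_nat Y + 1)).

Definition bad_approx (x : nat) (p : Z * Z) : Prop :=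
  let e := a * Z.of_nat x * fst p - snd p * q in
  1 <= fst p <= Z.of_nat Ym /\ e <> 0 /\ Z.abs e * (Z.of_nat Y + 1) <= q.

Definition chosen_approx (x : nat) : Z * Z := epsilon (inhabits (0, 0)) (bad_approx x).

(* The code of x: denominator, shifted error, and the block of length Y + 1 containing x. *)
Definition code (x : nat) : nat * nat * nat :=
  let p := chosen_approx x in
  (Z.to_nat (fst p), Z.to_nat (a * Z.of_nat x * fst p - snd p * q + Z.of_nat E),
   (x / (Y + 1))%nat).

Lemma error_le_E (e : Z) : Z.abs e * (Z.of_nat Y + 1) <= q -> Z.abs e <= Z.of_nat E.
Proof.
intro H. unfold E. rewrite Z2Nat.id by (apply Z.div_pos; lia).
apply Z.div_le_lower_bound; lia.
Qed.

Lemma same_block_close (x1 x2 : nat) : (x1 / (Y + 1) = x2 / (Y + 1))%nat ->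
  Z.abs (Z.of_nat x1 - Z.of_nat x2) <= Z.of_nat Y.
Proof.
intro H.
pose proof (Nat.div_mod x1 (Y + 1) ltac:(lia)). pose proof (Nat.div_mod x2 (Y + 1) ltac:(lia)).
pose proof (Nat.mod_upper_bound x1 (Y + 1) ltac:(lia)).
pose proof (Nat.mod_upper_bound x2 (Y + 1) ltac:(lia)).
rewrite H in *. lia.
Qed.

(* If x1, x2 share a code then q | y (x1 - x2) (as gcd(a, q) = 1), so q | e (x1 - x2);
   but 0 < |e (x1 - x2)| < q unless x1 = x2. *)
Lemma code_injective (x1 x2 : nat) :
  (exists p, bad_approx x1 p) -> (exists p, bad_approx x2 p) -> code x1 = code x2 -> x1 = x2.
Proof.
intros bad1 bad2 same_code.
pose proof (epsilon_spec (inhabits (0, 0)) (bad_approx x1) bad1) as spec1.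
pose proof (epsilon_spec (inhabits (0, 0)) (bad_approx x2) bad2) as spec2.
unfold code in same_code; fold (chosen_approx x1) (chosen_approx x2) in *.
destruct (chosen_approx x1) as [y M1], (chosen_approx x2) as [y2 M2].
destruct spec1 as [y_range [e1_nz e1_small]], spec2 as [y2_range [_ e2_small]].
simpl in *. injection same_code as same_y same_e same_block.
pose proof (error_le_E _ e1_small). pose proof (error_le_E _ e2_small).
assert (y2 = y) by lia; subst y2.
pose proof (same_block_close _ _ same_block) as close.
set (e := a * Z.of_nat x1 * y - M1 * q) in *.
set (d := Z.of_nat x1 - Z.of_nat x2) in *.
assert (q_div_yd : (q | y * d)).
{ apply (Z.gauss q a); [exists (M1 - M2); unfold d, e in *; lia | rewrite Z.gcd_comm; exact coprime_aq]. }
assert (q_div_ed : (q | e * d)).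
{ destruct q_div_yd as [k Hk]. exists (a * Z.of_nat x1 * k - M1 * d). unfold e.
  replace ((a * Z.of_nat x1 * y - M1 * q) * d) with (a * Z.of_nat x1 * (y * d) - M1 * q * d) by ring.
  rewrite Hk. ring. }
assert (ed_zero : e * d = 0).
{ apply (small_multiple_is_zero q); [exact q_div_ed|]. rewrite Z.abs_mul.
  assert (Z.abs e * Z.abs d <= Z.abs e * Z.of_nat Y) by (apply Z.mul_le_mono_nonneg_l; lia).
  nia. }
apply Z.mul_eq_0 in ed_zero as [|]; [contradiction | unfold d in *; lia].
Qed.

Lemma good_prime_exists :
  (Ym * (2 * E + 1) * (n / (Y + 1) + 1) < length (Chebyshev.primes_between Y n))%nat ->
  exists x y M, In x (Chebyshev.primes_between Y n) /\ 1 <= y <= Z.of_nat Y /\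
    Z.abs (a * Z.of_nat x * y - M * q) * (Z.of_nat Y + 1) <= q /\
    (a * Z.of_nat x * y - M * q = 0 \/ Z.of_nat Ym < y).
Proof.
intro many. apply NNPP; intro no_good.
assert (all_bad : forall x, In x (Chebyshev.primes_between Y n) -> exists p, bad_approx x p).
{ intros x x_in.
  destruct (dirichlet (a * Z.of_nat x) q (Z.of_nat Y) q_pos ltac:(lia)) as [y [M [y_range approx]]].
  exists (y, M); unfold bad_approx; simpl.
  assert (~ (a * Z.of_nat x * y - M * q = 0 \/ Z.of_nat Ym < y)).
  { intro good. apply no_good. exists x, y, M. auto. }
  repeat split; lia. }
set (codes := list_prod (list_prod (seq 1 Ym) (seq 0 (2 * E + 1))) (seq 0 (n / (Y + 1) + 1))).
assert (codes_cover : incl (map code (Chebyshev.primes_between Y n)) codes).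
{ intros c c_in. apply in_map_iff in c_in as [x [<- x_in]].
  destruct (Chebyshev.primes_between_range x_in) as [_ x_le].
  pose proof (epsilon_spec (inhabits (0, 0)) (bad_approx x) (all_bad x x_in)) as spec.
  unfold code. fold (chosen_approx x) in *. destruct (chosen_approx x) as [y M].
  destruct spec as [y_range [_ e_small]]; simpl in *. pose proof (error_le_E _ e_small).
  assert (x / (Y + 1) <= n / (Y + 1))%nat by (apply Nat.Div0.div_le_mono; lia).
  unfold codes. apply in_prod_iff. split; [apply in_prod_iff; split|]; apply in_seq; lia. }
assert (codes_distinct : NoDup (map code (Chebyshev.primes_between Y n))).
{ apply NoDup_map_NoDup_ForallPairs; [|apply Chebyshev.primes_between_NoDup].
  intros x1 x2 x1_in x2_in. apply code_injective; auto. }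
pose proof (NoDup_incl_length codes_distinct codes_cover) as too_many.
unfold codes in too_many. rewrite length_map, !length_prod, !length_seq in too_many. lia.
Qed.

End Counting.

Open Scope R_scope.

Lemma Rpower_pos (N s : R) : 0 < Rpower N s.
Proof. apply exp_pos. Qed.

Lemma Rpower_ge1 (N s : R) : 1 <= N -> 0 <= s -> 1 <= Rpower N s.
Proof. intros. rewrite <- (Rpower_O N) by lra. apply Rle_Rpower; lra. Qed.

Lemma nat_floor_exists (x : R) : 0 <= x -> exists n : nat, INR n <= x < INR n + 1.
Proof.
intro x_nonneg. destruct (Zfloor_bound x) as [lo hi].
assert (floor_nonneg : (0 <= Zfloor x)%Z) by (apply Zfloor_lub; simpl; lra).
exists (Z.to_nat (Zfloor x)). rewrite INR_IZR_INZ, Z2Nat.id by exact floor_nonneg. lra.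
Qed.

Lemma ratio_mono (c1 c2 q N s1 s2 : R) : 0 <= c1 <= c2 -> 0 < q -> 1 <= N -> s2 <= s1 ->
  c1 / (q * Rpower N s1) <= c2 / (q * Rpower N s2).
Proof.
intros c_le q_pos N_ge1 s_le.
pose proof (Rpower_pos N s2). pose proof (Rle_Rpower N s2 s1 N_ge1 s_le).
unfold Rdiv. apply Rmult_le_compat; [lra | left; apply Rinv_0_lt_compat; nra | lra |].
apply Rinv_le_contravar; [nra | apply Rmult_le_compat_l; lra].
Qed.

Lemma ln_le_mono (x y : R) : 0 < x -> x <= y -> ln x <= ln y.
Proof. intros. destruct (Req_dec x y) as [->|]; [lra|]. left; apply ln_increasing; lra. Qed.

Lemma log2_le_power (t N : R) (n : nat) : 0 < t -> (1 <= n)%nat -> INR n <= N ->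
  INR (S (Nat.log2 n)) <= (1 / (t * ln 2) + 1) * Rpower N t.
Proof.
intros t_pos n_pos n_le.
pose proof ln_lt_2 as ln2_bounds.
assert (N_ge1 : 1 <= N) by (apply le_INR in n_pos; simpl in n_pos; lra).
assert (digits : INR (S (Nat.log2 n)) * ln 2 <= ln N + ln 2).
{ destruct (Nat.log2_spec n ltac:(lia)) as [low _].
  apply le_INR in low. rewrite pow_INR in low. replace (INR 2) with 2 in low by (simpl; lra).
  assert (ln (2 ^ Nat.log2 n) <= ln N) by (apply ln_le_mono; [apply pow_lt |]; lra).
  rewrite ln_pow in H by lra. rewrite S_INR. lra. }
assert (ln_le_power : t * ln N <= Rpower N t).
{ unfold Rpower. pose proof (exp_ineq1_le (t * ln N)). lra. }
pose proof (Rpower_ge1 N t N_ge1 ltac:(lra)) as power_ge1.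
set (L := INR (S (Nat.log2 n))) in *. set (P := Rpower N t) in *.
assert (L <= P / (t * ln 2) + 1).
{ apply (Rmult_le_reg_r (ln 2)); [lra|].
  replace ((P / (t * ln 2) + 1) * ln 2) with (P / t + ln 2) by (field; lra).
  assert (ln N <= P / t) by (apply (Rmult_le_reg_l t); [lra|]; field_simplify; lra). lra. }
assert (0 < 1 / (t * ln 2)) by (apply Rdiv_lt_0_compat; nra).
replace (P / (t * ln 2)) with (1 / (t * ln 2) * P) in * by (field; lra). nra.
Qed.

(* With Y + 1 = t, N^{4/3} = P = Pd Nd and Nd = N^d >> l^5, the number of codes
   Ym (2E+1) K is smaller than the number len >= N/(8l) of primes in (Y, n]. *)
Lemma codes_fewer_than_primes (l t N q P Pd Nd C' E K len Ym : R) :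
  1 <= l -> 1 <= t <= N -> 1 <= q <= P -> N <= P -> 0 < Pd -> 0 < Nd ->
  P = Pd * Nd -> P * P * P = N ^ 4 -> N < 16 * l * t ->
  0 <= E -> E * t <= q -> 0 <= K <= 8 * l -> N <= 8 * l * len ->
  786432 * l ^ 5 < C' * Nd -> 0 <= Ym -> Ym * C' * t ^ 2 <= q * Pd ->
  Ym * (2 * E + 1) * K < len.
Proof.
intros l_ge1 t_range q_range N_le_P Pd_pos Nd_pos P_split P_cube N_lt E_pos E_le K_range
  N_le_len C'_large Ym_pos Ym_le.
assert (C'_pos : 0 < C') by (assert (0 < l ^ 5) by (apply pow_lt; lra); nra).
assert (t3_pos : 0 < t ^ 3) by (apply pow_lt; lra).
set (W := Ym * (2 * E + 1) * K).
assert (W_pos : 0 <= W) by (unfold W; apply Rmult_le_pos; [apply Rmult_le_pos|]; lra).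
(* each error e satisfies |e| <= E <= q/t, so 2E + 1 <= 3P/t *)
assert (errors_le : (2 * E + 1) * t <= 3 * P).
{ replace ((2 * E + 1) * t) with (2 * (E * t) + t) by ring. lra. }
assert (W_scaled : W * C' * t ^ 3 <= (q * Pd) * (3 * P) * (8 * l)).
{ replace (W * C' * t ^ 3) with ((Ym * C' * t ^ 2) * ((2 * E + 1) * t) * K) by (unfold W; ring).
  assert (0 <= Ym * C' * t ^ 2) by (apply Rmult_le_pos; [apply Rmult_le_pos | apply pow_le]; lra).
  apply Rmult_le_compat; [apply Rmult_le_pos | lra | apply Rmult_le_compat | lra]; nra. }
(* q P Pd <= P^2 Pd = N^4 / Nd *)
assert (W_N4 : W * (C' * Nd) * t ^ 3 <= 24 * l * N ^ 4).
{ assert (P_P_Pd : P * P * Pd * Nd = N ^ 4) by (rewrite <- P_cube, P_split; ring).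
  assert ((q * Pd) * (3 * P) * (8 * l) <= 24 * l * (P * P * Pd)).
  { assert (0 <= 24 * l * P * Pd) by (repeat apply Rmult_le_pos; lra).
    replace ((q * Pd) * (3 * P) * (8 * l)) with (24 * l * P * Pd * q) by ring.
    replace (24 * l * (P * P * Pd)) with (24 * l * P * Pd * P) by ring.
    apply Rmult_le_compat_l; lra. }
  replace (W * (C' * Nd) * t ^ 3) with ((W * C' * t ^ 3) * Nd) by ring.
  rewrite <- P_P_Pd. nra. }
assert (N3_lt : N ^ 3 < 4096 * l ^ 3 * t ^ 3).
{ replace (4096 * l ^ 3 * t ^ 3) with ((16 * l * t) ^ 3) by ring.
  set (u := 16 * l * t) in *. assert (N * N < u * u) by nra. simpl. nra. }
assert (W_small : W * (786432 * l ^ 5) * t ^ 3 <= W * (C' * Nd) * t ^ 3) by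
  (apply Rmult_le_compat_r; [lra | apply Rmult_le_compat_l; lra]).
assert (l4_pos : 0 < l ^ 4) by (apply pow_lt; lra).
assert (8 * l * W < N).
{ apply (Rmult_lt_reg_l (98304 * l ^ 4 * t ^ 3)); [nra|].
  replace (98304 * l ^ 4 * t ^ 3 * (8 * l * W)) with (W * (786432 * l ^ 5) * t ^ 3) by ring.
  assert (24 * l * N ^ 4 < 98304 * l ^ 4 * t ^ 3 * N).
  { replace (24 * l * N ^ 4) with (24 * l * N * N ^ 3) by ring.
    replace (98304 * l ^ 4 * t ^ 3 * N) with (24 * l * N * (4096 * l ^ 3 * t ^ 3)) by ring.
    apply Rmult_lt_compat_l; [nra | lra]. }
  lra. }
nra.
Qed.

(* M/(xy) approximates alpha as well as a/q does, up to the error e/(qxy), e = a x y - M q,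
   which is either zero or small because y is large. *)
Lemma approximation_error (alpha a q M x y t P Pd C' : R) :
  1 <= q -> 0 < t <= x -> 1 <= y -> 0 < Pd <= P -> 0 < C' ->
  Rabs (a * x * y - M * q) * t <= q -> (a * x * y - M * q = 0 \/ q * Pd < C' * t ^ 2 * y) ->
  Rabs (alpha - a / q) <= 1 / (q * P) ->
  Rabs (alpha - M / (x * y)) <= (1 + C') / (q * Pd).
Proof.
intros q_ge1 t_range y_ge1 Pd_range C'_pos e_small e_cases close.
set (e := a * x * y - M * q) in *.
assert (qxy_pos : 0 < q * x * y) by (apply Rmult_lt_0_compat; [apply Rmult_lt_0_compat|]; lra).
assert (split_err : alpha - M / (x * y) = (alpha - a / q) + e / (q * x * y)) by (unfold e; field; lra).
assert (first_le : 1 / (q * P) <= 1 / (q * Pd)).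
{ unfold Rdiv. apply Rmult_le_compat_l; [lra|]. apply Rinv_le_contravar; nra. }
assert (second_le : Rabs (e / (q * x * y)) <= C' / (q * Pd)).
{ unfold Rdiv. rewrite Rabs_mult, Rabs_inv, (Rabs_pos_eq (q * x * y)) by lra.
  destruct e_cases as [e_zero | y_large].
  - rewrite e_zero, Rabs_R0, Rmult_0_l. apply Rmult_le_pos; [lra|]. left; apply Rinv_0_lt_compat; nra.
  - (* |e| q Pd <= |e| C' t^2 y <= C' t y q <= C' q x y *)
    assert (Rabs e * (q * Pd) <= C' * (q * x * y)).
    { pose proof (Rabs_pos e).
      apply Rle_trans with (Rabs e * (C' * t ^ 2 * y)); [apply Rmult_le_compat_l; lra|].
      replace (Rabs e * (C' * t ^ 2 * y)) with (C' * t * y * (Rabs e * t)) by ring.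
      replace (C' * (q * x * y)) with (C' * y * q * x) by ring.
      assert (0 <= C' * t * y) by (repeat apply Rmult_le_pos; lra).
      apply Rle_trans with (C' * t * y * q); [apply Rmult_le_compat_l; lra|].
      replace (C' * t * y * q) with (C' * y * q * t) by ring.
      apply Rmult_le_compat_l; [repeat apply Rmult_le_pos|]; lra. }
    apply (Rmult_le_reg_r (q * x * y * (q * Pd))); [apply Rmult_lt_0_compat; nra|].
    replace (Rabs e * / (q * x * y) * (q * x * y * (q * Pd))) with (Rabs e * (q * Pd)) by (field; lra).
    replace (C' * / (q * Pd) * (q * x * y * (q * Pd))) with (C' * (q * x * y)) by (field; nra).
    lra. }
rewrite split_err. eapply Rle_trans; [apply Rabs_triang|].
replace ((1 + C') / (q * Pd)) with (1 / (q * Pd) + C' / (q * Pd)) by (field; nra). lra.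
Qed.

(* Bezout splitting: if u x - v y = 1 then M/(xy) = (-M v)/x + (M u)/y, so the approximation
   of approximation_error is a sum of two fractions with denominators x and y. *)
Lemma two_fraction_approximation (alpha a q M x y u v t P Pd C' : R) :
  u * x - v * y = 1 ->
  1 <= q -> 0 < t <= x -> 1 <= y -> 0 < Pd <= P -> 0 < C' ->
  Rabs (a * x * y - M * q) * t <= q -> (a * x * y - M * q = 0 \/ q * Pd < C' * t ^ 2 * y) ->
  Rabs (alpha - a / q) <= 1 / (q * P) ->
  Rabs (alpha - - (M * v) / x - M * u / y) <= (1 + C') / (q * Pd).
Proof.
intros bezout q_ge1 t_range y_ge1 Pd_range C'_pos e_small e_cases close.
replace (alpha - - (M * v) / x - M * u / y) with (alpha - M * (u * x - v * y) / (x * y))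
  by (field; lra).
rewrite bezout, Rmult_1_r.
exact (approximation_error alpha a q M x y t P Pd C' q_ge1 t_range y_ge1 Pd_range C'_pos
  e_small e_cases close).
Qed.

Section Scales.
Variable d : R.
Hypothesis d_range : 0 < d <= 1.

(* B_d, with floor(log2 n) + 1 <= B_d N^{d/5} for n <= N. *)
Definition digit_constant : R := 1 / (d / 5 * ln 2) + 1.
Definition error_constant : R := 786433 * digit_constant ^ 5.
(* Beyond this threshold 32 B_d N^{1/5} <= N. *)
Definition threshold : R := Rmax 2 ((32 * digit_constant) ^ 2).

Lemma digit_constant_pos : 0 < digit_constant.
Proof.
pose proof ln_lt_2. unfold digit_constant.
assert (0 < 1 / (d / 5 * ln 2)) by (apply Rdiv_lt_0_compat; [|apply Rmult_lt_0_compat]; lra).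
lra.
Qed.

Lemma error_constant_pos : 0 < error_constant.
Proof.
unfold error_constant. pose proof digit_constant_pos. apply Rmult_lt_0_compat; [lra | apply pow_lt; lra].
Qed.

Lemma beyond_threshold (N : R) : threshold <= N -> 2 <= N /\ 32 * digit_constant * Rpower N (1/5) <= N.
Proof.
intro N_large. pose proof digit_constant_pos.
pose proof (Rmax_l 2 ((32 * digit_constant) ^ 2)). pose proof (Rmax_r 2 ((32 * digit_constant) ^ 2)).
fold threshold in *. split; [lra|].
assert (B_le_sqrt : 32 * digit_constant <= sqrt N).
{ rewrite <- (sqrt_pow2 (32 * digit_constant)) by lra. apply sqrt_le_1_alt. lra. }
assert (sqrt_le : sqrt N <= Rpower N (4/5)) by (rewrite <- Rpower_sqrt by lra; apply Rle_Rpower; lra).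
assert (N_split : N = Rpower N (1/5) * Rpower N (4/5)).
{ rewrite <- Rpower_plus. replace (1/5 + 4/5) with 1 by field. rewrite Rpower_1; lra. }
pose proof (Rpower_pos N (1/5)).
rewrite N_split at 2. rewrite Rmult_comm. apply Rmult_le_compat_l; lra.
Qed.

Lemma scales_exist (N : R) : threshold <= N ->
  exists n l Y : nat, INR n <= N < INR n + 1 /\ INR l <= digit_constant * Rpower N (d / 5) /\
    (1 <= Y)%nat /\ (Y + 1 <= n)%nat /\ (n < 8 * l * (Y + 1))%nat /\
    (n <= 4 * l * length (Chebyshev.primes_between Y n))%nat.
Proof.
intro N_large. destruct (beyond_threshold N N_large) as [N_ge2 N_large'].
destruct (nat_floor_exists N ltac:(lra)) as [n [n_le n_gt]].
assert (n_pos : (1 <= n)%nat) by (apply INR_le; simpl; lra).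
set (l := S (Nat.log2 n)).
assert (l_le : INR l <= digit_constant * Rpower N (d / 5)) by (apply log2_le_power; [lra | lia | lra]).
assert (l_small : (16 * l < n)%nat).
{ pose proof digit_constant_pos.
  assert (Rpower N (d / 5) <= Rpower N (1 / 5)) by (apply Rle_Rpower; lra).
  assert (32 * INR l <= N) by nra.
  apply INR_lt. rewrite mult_INR. simpl (INR 16). lra. }
assert (n_lt : (n < 2 ^ l)%nat) by (apply Nat.log2_spec; lia).
set (Y := (n / (8 * l))%nat).
assert (Y_low : (8 * l * Y <= n)%nat) by apply Nat.Div0.mul_div_le.
assert (Y_high : (n < 8 * l * (Y + 1))%nat).
{ pose proof (Nat.div_mod n (8 * l) ltac:(lia)) as div_eq.
  pose proof (Nat.mod_upper_bound n (8 * l) ltac:(lia)). fold Y in div_eq. nia. }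
assert (Y_pos : (1 <= Y)%nat) by (apply Nat.div_le_lower_bound; lia).
pose proof (many_large_primes Y n l l_small n_lt Y_low).
exists n, l, Y. repeat split; try assumption; nia.
Qed.

(* The choice C'_d = 786433 B_d^5 beats the factor l^5 lost in the counting. *)
Lemma error_constant_dominates (N : R) (l : nat) : 1 <= N ->
  INR l <= digit_constant * Rpower N (d / 5) -> 786432 * INR l ^ 5 < error_constant * Rpower N d.
Proof.
intros N_ge1 l_le. pose proof digit_constant_pos. pose proof (Rpower_pos N d).
assert (INR l ^ 5 <= digit_constant ^ 5 * Rpower N d).
{ replace (Rpower N d) with (Rpower N (d / 5) ^ 5)
    by (rewrite <- Rpower_pow by apply Rpower_pos; rewrite Rpower_mult; f_equal; simpl; field).
  rewrite <- Rpow_mult_distr. apply pow_incr. split; [apply pos_INR | lra]. }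
assert (0 < digit_constant ^ 5 * Rpower N d) by (apply Rmult_lt_0_compat; [apply pow_lt|]; lra).
unfold error_constant. nra.
Qed.

Lemma few_codes_at_scale (N : R) (q : Z) (n l Y Ym : nat) :
  1 <= N -> INR n <= N < INR n + 1 -> INR l <= digit_constant * Rpower N (d / 5) ->
  (Y + 1 <= n)%nat -> (n < 8 * l * (Y + 1))%nat ->
  (n <= 4 * l * length (Chebyshev.primes_between Y n))%nat ->
  (1 <= q)%Z -> IZR q <= Rpower N (4/3) ->
  INR Ym * error_constant * (INR Y + 1) ^ 2 <= IZR q * Rpower N (4/3 - d) ->
  (Ym * (2 * Z.to_nat (q / (Z.of_nat Y + 1)) + 1) * (n / (Y + 1) + 1)
     < length (Chebyshev.primes_between Y n))%nat.
Proof.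
intros N_ge1 [n_le n_gt] l_le Y_le n_lt len_large q_pos q_le Ym_le.
assert (l_pos : (1 <= l)%nat) by (destruct l; lia).
set (t := INR Y + 1) in *. set (E := Z.to_nat (q / (Z.of_nat Y + 1))).
set (K := (n / (Y + 1) + 1)%nat). set (len := length (Chebyshev.primes_between Y n)) in *.
assert (l_ge1 : 1 <= INR l) by (apply (le_INR 1); exact l_pos).
assert (t_le_n : t <= INR n).
{ apply le_INR in Y_le. rewrite plus_INR in Y_le. change (INR 1) with 1 in Y_le. exact Y_le. }
assert (t_ge1 : 1 <= t) by (unfold t; pose proof (pos_INR Y); lra).
assert (t_range : 1 <= t <= N) by lra.
assert (N_le_P : N <= Rpower N (4/3)) by (rewrite <- (Rpower_1 N) at 1 by lra; apply Rle_Rpower; lra).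
assert (P_split : Rpower N (4/3) = Rpower N (4/3 - d) * Rpower N d)
  by (rewrite <- Rpower_plus; f_equal; ring).
assert (P_cube : Rpower N (4/3) * Rpower N (4/3) * Rpower N (4/3) = N ^ 4).
{ rewrite <- !Rpower_plus, <- Rpower_pow by lra. f_equal. simpl. lra. }
assert (N_lt : N < 16 * INR l * t).
{ apply lt_INR in n_lt. rewrite !mult_INR, plus_INR in n_lt. change (INR 1) with 1 in n_lt.
  fold t in n_lt. replace (INR 8) with 8 in n_lt by (simpl; lra). lra. }
assert (E_le : INR E * t <= IZR q).
{ assert (E_le : (Z.of_nat E * (Z.of_nat Y + 1) <= q)%Z).
  { unfold E. rewrite Z2Nat.id by (apply Z.div_pos; lia). rewrite Z.mul_comm. apply Z.mul_div_le. lia. }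
  apply IZR_le in E_le. rewrite mult_IZR, plus_IZR, <- !INR_IZR_INZ in E_le. exact E_le. }
assert (K_le : 0 <= INR K <= 8 * INR l).
{ assert (n / (Y + 1) < 8 * l)%nat
    by (apply Nat.Div0.div_lt_upper_bound; rewrite Nat.mul_comm; exact n_lt).
  assert (K_le : (K <= 8 * l)%nat) by (unfold K; lia).
  split; [apply pos_INR|]. apply le_INR in K_le. rewrite mult_INR in K_le.
  replace (INR 8) with 8 in K_le by (simpl; lra). exact K_le. }
assert (len_large' : N <= 8 * INR l * INR len).
{ apply le_INR in len_large. rewrite !mult_INR in len_large.
  replace (INR 4) with 4 in len_large by (simpl; lra). lra. }
apply INR_lt. rewrite !mult_INR, plus_INR, mult_INR. replace (INR 2) with 2 by (simpl; lra).
exact (codes_fewer_than_primes (INR l) t N (IZR q) (Rpower N (4/3)) (Rpower N (4/3 - d))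
  (Rpower N d) error_constant (INR E) (INR K) (INR len) (INR Ym) l_ge1 t_range
  (conj (IZR_le 1 q q_pos) q_le) N_le_P (Rpower_pos _ _) (Rpower_pos _ _) P_split P_cube N_lt
  (pos_INR E) E_le K_le len_large' (error_constant_dominates N l N_ge1 l_le) (pos_INR Ym) Ym_le).
Qed.

Lemma good_prime_at_scale (N : R) (a q : Z) (n l Y : nat) :
  1 <= N -> INR n <= N < INR n + 1 -> INR l <= digit_constant * Rpower N (d / 5) ->
  (1 <= Y)%nat -> (Y + 1 <= n)%nat -> (n < 8 * l * (Y + 1))%nat ->
  (n <= 4 * l * length (Chebyshev.primes_between Y n))%nat ->
  (1 <= q)%Z -> IZR q <= Rpower N (4/3) -> Z.gcd a q = 1%Z ->
  exists x y M, In x (Chebyshev.primes_between Y n) /\ (1 <= y <= Z.of_nat Y)%Z /\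
    (Z.abs (a * Z.of_nat x * y - M * q) * (Z.of_nat Y + 1) <= q)%Z /\
    ((a * Z.of_nat x * y - M * q = 0)%Z \/
     IZR q * Rpower N (4/3 - d) < error_constant * (INR Y + 1) ^ 2 * IZR y).
Proof.
intros N_ge1 n_floor l_le Y_pos Y_le n_lt len_large q_pos q_le coprime_aq.
set (t := INR Y + 1). set (Pd := Rpower N (4/3 - d)). set (C' := error_constant).
assert (C'_pos : 0 < C') by exact error_constant_pos.
assert (t_ge1 : 1 <= t) by (unfold t; pose proof (pos_INR Y); lra).
assert (scale_pos : 0 < C' * t ^ 2) by (apply Rmult_lt_0_compat; [lra | apply pow_lt; lra]).
(* Ym = floor(q Pd / (C' t^2)), the bound for "small" denominators *)
destruct (nat_floor_exists (IZR q * Pd / (C' * t ^ 2))) as [Ym [Ym_le Ym_gt]].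
{ apply Rmult_le_pos; [apply Rmult_le_pos; [apply IZR_le; lia | apply Rlt_le, Rpower_pos]|].
  left. apply Rinv_0_lt_compat. exact scale_pos. }
assert (Ym_le' : INR Ym * C' * t ^ 2 <= IZR q * Pd).
{ apply (Rmult_le_reg_r (/ (C' * t ^ 2))); [apply Rinv_0_lt_compat; lra|].
  replace (INR Ym * C' * t ^ 2 * / (C' * t ^ 2)) with (INR Ym) by (field; lra). exact Ym_le. }
pose proof (few_codes_at_scale N q n l Y Ym N_ge1 n_floor l_le Y_le n_lt len_large q_pos q_le
  Ym_le') as few_codes.
destruct (good_prime_exists a q Y Ym n q_pos coprime_aq Y_pos few_codes)
  as [x [y [M [x_in [y_range [e_small e_cases]]]]]].
exists x, y, M. repeat split; try tauto.
destruct e_cases as [e_zero | y_large]; [left; exact e_zero | right].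
assert (y_large' : (Z.of_nat Ym + 1 <= y)%Z) by lia.
apply IZR_le in y_large'. rewrite plus_IZR, <- INR_IZR_INZ in y_large'.
apply (Rmult_lt_reg_r (/ (C' * t ^ 2))); [apply Rinv_0_lt_compat; lra|].
replace (C' * t ^ 2 * IZR y * / (C' * t ^ 2)) with (IZR y) by (field; lra).
unfold Rdiv in Ym_gt. lra.
Qed.

Lemma large_N_approximation (N alpha : R) (a q : Z) :
  threshold <= N -> (1 <= q)%Z -> IZR q <= Rpower N (4/3) -> Z.gcd a q = 1%Z ->
  Rabs (alpha - IZR a / IZR q) <= 1 / (IZR q * Rpower N (4/3)) ->
  exists a1 a2 q1 q2 : Z, (1 <= q1)%Z /\ IZR q1 <= N /\ (1 <= q2)%Z /\ IZR q2 <= N /\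
    Rabs (alpha - IZR a1 / IZR q1 - IZR a2 / IZR q2)
      <= (1 + error_constant) / (IZR q * Rpower N (4/3 - d)).
Proof.
intros N_large q_pos q_le coprime_aq close.
destruct (scales_exist N N_large) as [n [l [Y [n_floor [l_le [Y_pos [Y_le [n_lt len_large]]]]]]]].
pose proof (proj1 (beyond_threshold N N_large)) as N_ge2.
destruct (good_prime_at_scale N a q n l Y ltac:(lra) n_floor l_le Y_pos Y_le n_lt len_large
  q_pos q_le coprime_aq) as [x [y [M [x_in [y_range [e_small e_cases]]]]]].
destruct (Chebyshev.primes_between_range x_in) as [x_gt x_le].
destruct (Chebyshev.primes_between_bezout (y := Z.to_nat y) x_in ltac:(lia)) as [u [v bezout]].
assert (bezout_R : IZR (Z.of_nat u) * IZR (Z.of_nat x) - IZR (Z.of_nat v) * IZR y = 1).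
{ rewrite <- !mult_IZR, <- minus_IZR. apply (f_equal IZR). lia. }
set (t := INR Y + 1).
assert (t_ge1 : 1 <= t) by (unfold t; pose proof (pos_INR Y); lra).
assert (t_le_x : t <= IZR (Z.of_nat x)).
{ rewrite <- INR_IZR_INZ. unfold t. change 1 with (INR 1). rewrite <- plus_INR. apply le_INR. lia. }
assert (y_ge1 : 1 <= IZR y) by (apply IZR_le; lia).
assert (x_le_N : IZR (Z.of_nat x) <= N) by (rewrite <- INR_IZR_INZ; apply le_INR in x_le; lra).
assert (y_le_N : IZR y <= N).
{ assert (y_le : IZR y <= INR Y) by (rewrite INR_IZR_INZ; apply IZR_le; lia).
  apply le_INR in Y_le. rewrite plus_INR in Y_le. change (INR 1) with 1 in Y_le. lra. }
exists (- (M * Z.of_nat v))%Z, (M * Z.of_nat u)%Z, (Z.of_nat x), y.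
repeat split; try lia; try lra.
rewrite opp_IZR, !mult_IZR.
apply (two_fraction_approximation alpha (IZR a) (IZR q) (IZR M) _ _ _ _ t (Rpower N (4/3))).
- exact bezout_R.
- apply IZR_le in q_pos. exact q_pos.
- lra.
- exact y_ge1.
- split; [apply Rpower_pos | apply Rle_Rpower; lra].
- exact error_constant_pos.
- apply IZR_le in e_small. rewrite mult_IZR, plus_IZR, abs_IZR, minus_IZR, !mult_IZR,
    <- (INR_IZR_INZ Y) in e_small. exact e_small.
- destruct e_cases as [e_zero | y_large]; [left | right; exact y_large].
  apply (f_equal IZR) in e_zero. rewrite minus_IZR, !mult_IZR in e_zero. exact e_zero.
- exact close.
Qed.

End Scales.

(* For bounded N the statement is trivial: approximate alpha by floor(alpha)/1 + 0/1. *)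
Lemma small_N_approximation (eps N N0 alpha : R) (q : Z) :
  0 < eps -> 1 <= N <= N0 -> (1 <= q)%Z -> IZR q <= Rpower N (4/3) ->
  exists a1 a2 q1 q2 : Z, (1 <= q1)%Z /\ IZR q1 <= N /\ (1 <= q2)%Z /\ IZR q2 <= N /\
    Rabs (alpha - IZR a1 / IZR q1 - IZR a2 / IZR q2) <= N0 ^ 3 / (IZR q * Rpower N (4/3 - eps)).
Proof.
intros eps_pos N_range q_pos q_le.
assert (q_ge1 : 1 <= IZR q) by (apply IZR_le; lia).
pose proof (Rpower_pos N (4/3 - eps)) as Pe_pos.
(* q N^{4/3 - eps} <= N^{4/3} N^{4/3} <= N^3 <= N0^3 *)
assert (denominator_le : IZR q * Rpower N (4/3 - eps) <= N0 ^ 3).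
{ assert (Rpower N (4/3 - eps) <= Rpower N (4/3)) by (apply Rle_Rpower; lra).
  assert (Rpower N (4/3) * Rpower N (4/3) <= N ^ 3).
  { rewrite <- Rpower_plus, <- Rpower_pow by lra. apply Rle_Rpower; simpl; lra. }
  assert (N ^ 3 <= N0 ^ 3) by (apply pow_incr; lra).
  pose proof (Rpower_pos N (4/3)). nra. }
exists (Zfloor alpha), 0%Z, 1%Z, 1%Z. repeat split; try lia; try lra.
destruct (Zfloor_bound alpha) as [floor_le floor_gt].
replace (alpha - IZR (Zfloor alpha) / 1 - 0 / 1) with (alpha - IZR (Zfloor alpha)) by field.
rewrite Rabs_pos_eq by lra.
apply Rle_trans with 1; [lra|].
apply (Rmult_le_reg_r (IZR q * Rpower N (4/3 - eps))); [nra|].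
unfold Rdiv. rewrite Rmult_assoc, Rinv_l by nra. lra.
Qed.

Theorem corollary1 :
  forall eps : R, 0 < eps ->
  exists C : R, 0 < C /\
  forall (N alpha : R) (a q : Z),
    1 <= N ->
    (1 <= q)%Z ->
    IZR q <= Rpower N (4/3) ->
    Z.gcd a q = 1%Z ->
    Rabs (alpha - IZR a / IZR q) <= 1 / (IZR q * Rpower N (4/3)) ->
    exists (a1 a2 q1 q2 : Z),
      (1 <= q1)%Z /\ IZR q1 <= N /\
      (1 <= q2)%Z /\ IZR q2 <= N /\
      Rabs (alpha - IZR a1 / IZR q1 - IZR a2 / IZR q2)
        <= C / (IZR q * Rpower N (4/3 - eps)).
Proof.
intros eps eps_pos.
set (d := Rmin eps 1).
assert (d_range : 0 < d <= 1) by (unfold d, Rmin; destruct (Rle_dec eps 1); lra).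
assert (d_le : d <= eps) by apply Rmin_l.
set (C' := error_constant d). set (N0 := threshold d).
assert (C'_pos : 0 < C') by exact (error_constant_pos d d_range).
assert (N0_ge2 : 2 <= N0) by (unfold N0, threshold; apply Rmax_l).
assert (N0_cube : 0 < N0 ^ 3) by (apply pow_lt; lra).
exists (1 + C' + N0 ^ 3). split; [lra|].
intros N alpha a q N_ge1 q_pos q_le coprime_aq close.
assert (q_R : 0 < IZR q) by (apply IZR_lt; lia).
destruct (Rlt_or_le N N0) as [N_small | N_large].
- destruct (small_N_approximation eps N N0 alpha q eps_pos ltac:(lra) q_pos q_le)
    as [a1 [a2 [q1 [q2 [? [? [? [? bound]]]]]]]].
  exists a1, a2, q1, q2. repeat split; try assumption.
  apply (Rle_trans _ _ _ bound). apply ratio_mono; lra.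
- destruct (large_N_approximation d d_range N alpha a q N_large q_pos q_le coprime_aq close)
    as [a1 [a2 [q1 [q2 [? [? [? [? bound]]]]]]]].
  exists a1, a2, q1, q2. repeat split; try assumption.
  fold C' in bound. apply (Rle_trans _ _ _ bound). apply ratio_mono; lra.
Qed.
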